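(* Let $p\geq p_F(\sigma)=m+\frac{\sigma+2}{N}$ and let $(X,Y,Z)(\eta)$ be a trajectory of system (S1) such that there is $\eta_*\in\mathbb{R}$ with $X(\eta_* )>0$, $Z(\eta_* )>0$ and $$-\frac{\beta}{\alpha}<Y(\eta)<0\qquad\text{for all }\eta>\eta_*.$$ Then, as $\eta\to\infty$, the trajectory converges either to $P_1=(0,0,0)$ or to $P_{\gamma_0}=(0,0,\gamma_0)$ with $\gamma_0=\frac{1}{\alpha(p-1)}$. Moreover, in the region $\{X>0,Z>0\}$ the flow of (S1) across the plane $\{Y=-\beta/\alpha\}$ points towards $\{Y>-\beta/\alpha\}$, so no trajectory with $X>0$, $Z>0$ crosses this plane from $\{Y>-\beta/\alpha\}$ to $\{Y<-\beta/\alpha\}$.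
   Context: Let $N\geq1$, $m>1$, $\sigma>0$, $p>m$, $L=\sigma(m-1)+2(p-1)$, $\alpha=(\sigma+2)/L$, $\beta=(p-m)/L$ (so $\beta/\alpha=(p-m)/(\sigma+2)$). System (S1) is $$\dot X=X[(m-1)Y-2X],\quad \dot Y=-Y^2-\tfrac{p-m}{\sigma+2}Y-X-NXY+XZ,\quad \dot Z=Z[(p-1)Y+\sigma X],$$ obtained from profiles $f>0$ of $(f^m)''+\frac{N-1}{\xi}(f^m)'+\alpha f+\beta\xi f'-\xi^\sigma f^p=0$ via $X=\frac{m}{\alpha}\xi^{-2}f^{m-1}$, $Y=\frac{m}{\alpha}\xi^{-1}f^{m-2}f'$, $Z=\frac1\alpha\xi^\sigma f^{p-1}$. *)

From Stdlib Require Import Reals.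
From Coquelicot Require Import Coquelicot.
Open Scope R_scope.

Definition Lpar (m sigma p : R) : R := sigma * (m - 1) + 2 * (p - 1).
Definition alpha (m sigma p : R) : R := (sigma + 2) / Lpar m sigma p.
Definition beta (m sigma p : R) : R := (p - m) / Lpar m sigma p.
Definition gamma0 (m sigma p : R) : R := 1 / (alpha m sigma p * (p - 1)).
Definition pF (N : nat) (m sigma : R) : R := m + (sigma + 2) / INR N.

Definition S1_X (N : nat) (m sigma p x y z : R) : R := x * ((m - 1) * y - 2 * x).
Definition S1_Y (N : nat) (m sigma p x y z : R) : R :=
  - y ^ 2 - (p - m) / (sigma + 2) * y - x - INR N * x * y + x * z.
Definition S1_Z (N : nat) (m sigma p x y z : R) : R := z * ((p - 1) * y + sigma * x).

Definition S1_solution_from (N : nat) (m sigma p : R) (X Y Z : R -> R) (eta0 : R) : Prop :=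
  forall eta, eta0 <= eta ->
    is_derive X eta (S1_X N m sigma p (X eta) (Y eta) (Z eta)) /\
    is_derive Y eta (S1_Y N m sigma p (X eta) (Y eta) (Z eta)) /\
    is_derive Z eta (S1_Z N m sigma p (X eta) (Y eta) (Z eta)).

Definition converges_to (X Y Z : R -> R) (a b c : R) : Prop :=
  is_lim X p_infty a /\ is_lim Y p_infty b /\ is_lim Z p_infty c.

(* Write b = beta/alpha.  On the plane Y = -b the Y-component of the field equals
   X (N b - 1 + Z), which is positive because N b >= 1 is exactly p >= p_F.

   Along a trajectory trapped in -b < Y < 0, (1/X)' = 2 - (m-1) Y/X >= 2, so X decays like 1/t.
   Then Y -> 0 (while Y stays below a level -del, Y' is bounded below by a positive constant),
   and eventually -Y < C X, so 1/X also grows at most linearly and X is not integrable.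
   With k = (p-1)/b, the function ln Z + k Y has derivative k X (Z - gamma0) + O(X^2); adding
   suitable multiples of X gives Psi_lo <= ln Z <= Psi_hi with Psi_lo' >= k X (Z - gamma0) >= Psi_hi'.
   If Psi_hi ever drops below ln gamma0 it stays there and, X not being integrable, tends to -oo,
   so Z -> 0.  Otherwise Psi_lo never rises above ln gamma0 (it would tend to +oo, against the
   boundedness of Z), and ln Z is squeezed to ln gamma0. *)

From Stdlib Require Import Reals Lra Classical.
From Coquelicot Require Import Coquelicot.
Open Scope R_scope.

Lemma continuity_pt_ball (f : R -> R) (x : R) : continuity_pt f x ->
  forall eps, 0 < eps -> exists del, 0 < del /\
    forall y, Rabs (y - x) < del -> Rabs (f y - f x) < eps.
Proof.
  intros Hc eps Heps.
  destruct (proj1 (continuity_pt_locally f x) Hc (mkposreal eps Heps)) as [del Hdel].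
  exists del; split; [apply cond_pos|]. intros y Hy; apply Hdel, Hy.
Qed.

Lemma first_hit (f : R -> R) (a c t : R) : a <= t ->
  (forall u, a <= u <= t -> continuity_pt f u) -> c < f a -> f t <= c ->
  exists s, a < s <= t /\ f s = c /\ forall u, a <= u < s -> c < f u.
Proof.
  intros Hat Hc Ha Ht.
  set (E := fun s => a <= s <= t /\ forall u, a <= u <= s -> c < f u).
  assert (HEa : E a) by (split; [lra|intros u Hu; replace u with a by lra; exact Ha]).
  destruct (completeness E (ex_intro _ t (fun s Hs => proj2 (proj1 Hs))) (ex_intro _ a HEa))
    as [s0 [Hub Hlub]].
  assert (Has0 : a <= s0) by (apply Hub, HEa).
  assert (Hs0t : s0 <= t) by (apply Hlub; intros s Hs; apply Hs).
  assert (Hbelow : forall u, a <= u < s0 -> c < f u).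
  { intros u Hu. apply Rnot_le_lt; intros Hfu.
    enough (s0 <= u) by lra.
    apply Hlub. intros s [_ Hs]. apply Rnot_lt_le; intros Hus.
    specialize (Hs u ltac:(lra)). lra. }
  assert (Hge : c <= f s0).
  { destruct (Req_dec s0 a) as [->|Hne]; [lra|]. apply Rnot_lt_le; intros Hlt.
    destruct (continuity_pt_ball f s0 (Hc s0 ltac:(lra)) (c - f s0) ltac:(lra)) as [del [Hdel Hball]].
    set (u := s0 - Rmin (del / 2) ((s0 - a) / 2)).
    pose proof (Rmin_l (del / 2) ((s0 - a) / 2)). pose proof (Rmin_r (del / 2) ((s0 - a) / 2)).
    assert (0 < Rmin (del / 2) ((s0 - a) / 2)) by (apply Rmin_pos; lra).
    specialize (Hbelow u ltac:(unfold u; lra)).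
    specialize (Hball u ltac:(unfold u; rewrite Rabs_left; lra)).
    apply Rabs_lt_between in Hball. lra. }
  assert (Hle : f s0 <= c).
  { apply Rnot_lt_le; intros Hgt.
    assert (Hs0t' : s0 < t) by (destruct (Req_dec s0 t) as [->|]; lra).
    destruct (continuity_pt_ball f s0 (Hc s0 ltac:(lra)) (f s0 - c) ltac:(lra)) as [del [Hdel Hball]].
    set (s1 := s0 + Rmin (del / 2) ((t - s0) / 2)).
    pose proof (Rmin_l (del / 2) ((t - s0) / 2)). pose proof (Rmin_r (del / 2) ((t - s0) / 2)).
    assert (0 < Rmin (del / 2) ((t - s0) / 2)) by (apply Rmin_pos; lra).
    enough (HE1 : E s1) by (specialize (Hub s1 HE1); unfold s1 in Hub; lra).
    split; [unfold s1; lra|]. intros u Hu.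
    destruct (Rlt_le_dec u s0) as [Hus|Hus]; [apply Hbelow; lra|].
    specialize (Hball u ltac:(rewrite Rabs_pos_eq; unfold s1 in Hu; lra)).
    apply Rabs_lt_between in Hball. lra. }
  exists s0. split; [|split; [lra|exact Hbelow]].
  split; [|exact Hs0t]. destruct (Req_dec s0 a) as [->|]; lra.
Qed.

Lemma is_derive_nonpos_of_left_gt (f : R -> R) (a s l : R) : a < s ->
  (forall u, a <= u < s -> f s < f u) -> is_derive f s l -> l <= 0.
Proof.
  intros Has Hgt Hd. apply Rnot_lt_le; intros Hl.
  destruct (proj1 (is_derive_Reals f s l) Hd l Hl) as [del Hdel].
  pose proof (cond_pos del) as Hdel0.
  set (h := - Rmin (del / 2) ((s - a) / 2)).
  pose proof (Rmin_l (del / 2) ((s - a) / 2)). pose proof (Rmin_r (del / 2) ((s - a) / 2)).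
  assert (Hmin : 0 < Rmin (del / 2) ((s - a) / 2)) by (apply Rmin_pos; lra).
  assert (Hh : h < 0) by (unfold h; lra).
  assert (Hhd : Rabs h < del) by (rewrite Rabs_left by lra; unfold h; lra).
  specialize (Hdel h ltac:(lra) Hhd). apply Rabs_lt_between in Hdel.
  assert (Hfh : f s < f (s + h)) by (apply Hgt; unfold h; lra).
  assert (Hq : (f (s + h) - f s) / h < 0).
  { apply Ropp_lt_cancel. rewrite Ropp_0, <- Rdiv_opp_r. apply Rdiv_lt_0_compat; lra. }
  lra.
Qed.

Lemma barrier_gt (f df : R -> R) (a c : R) :
  (forall t, a <= t -> is_derive f t (df t)) -> c < f a ->
  (forall t, a < t -> f t = c -> 0 < df t) ->
  forall t, a <= t -> c < f t.
Proof.
  intros Hd Ha Hc t Hat. apply Rnot_le_lt; intros Ht.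
  destruct (first_hit f a c t Hat) as [s [Hs [Hfs Hbelow]]]; [|exact Ha|exact Ht|].
  { intros u Hu. apply continuity_pt_filterlim, (ex_derive_continuous f u).
    exists (df u). apply Hd; lra. }
  assert (Hds : df s <= 0).
  { apply (is_derive_nonpos_of_left_gt f a s); [lra| |apply Hd; lra].
    intros u Hu. rewrite Hfs. now apply Hbelow. }
  specialize (Hc s ltac:(lra) Hfs). lra.
Qed.

Lemma barrier_lt (f df : R -> R) (a c : R) :
  (forall t, a <= t -> is_derive f t (df t)) -> f a < c ->
  (forall t, a < t -> f t = c -> df t < 0) ->
  forall t, a <= t -> f t < c.
Proof.
  intros Hd Ha Hc t Ht.
  enough (- c < - f t) by lra.
  apply (barrier_gt (fun s => - f s) (fun s => - df s) a); [| lra | | exact Ht].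
  - intros s Hs. apply (is_derive_opp f s (df s)), Hd; exact Hs.
  - intros s Hs Hfs. assert (df s < 0) by (apply Hc; lra). lra.
Qed.

Lemma nondecreasing_of_deriv_nonneg (f df : R -> R) (a b : R) : a <= b ->
  (forall t, a <= t <= b -> is_derive f t (df t)) ->
  (forall t, a < t < b -> 0 <= df t) -> f a <= f b.
Proof.
  intros Hab Hd Hpos.
  destruct (Req_dec a b) as [->|Hne]; [lra|].
  destruct (MVT_cor2 f df a b) as [c [Heq Hc]]; [lra| |].
  - intros c Hc. now apply is_derive_Reals, Hd.
  - specialize (Hpos c Hc). nra.
Qed.

Lemma deriv_ge_linear_lower_bound (f df : R -> R) (a k : R) :
  (forall t, a <= t -> is_derive f t (df t)) -> (forall t, a <= t -> k <= df t) ->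
  forall t, a <= t -> f a + k * (t - a) <= f t.
Proof.
  intros Hd Hk t Ht.
  enough (f a - k * a <= f t - k * t) by lra.
  apply (nondecreasing_of_deriv_nonneg (fun s => f s - k * s) (fun s => df s - k)); [exact Ht| |].
  - intros s Hs. apply (is_derive_minus f (fun s => k * s)); [apply Hd; lra|].
    auto_derive; [easy|ring].
  - intros s Hs. specialize (Hk s ltac:(lra)). lra.
Qed.

Lemma deriv_le_linear_upper_bound (f df : R -> R) (a k : R) :
  (forall t, a <= t -> is_derive f t (df t)) -> (forall t, a <= t -> df t <= k) ->
  forall t, a <= t -> f t <= f a + k * (t - a).
Proof.
  intros Hd Hk t Ht.
  enough (- f a + - k * (t - a) <= - f t) by lra.
  apply (deriv_ge_linear_lower_bound (fun s => - f s) (fun s => - df s)); [| |exact Ht].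
  - intros s Hs. apply (is_derive_opp f s (df s)), Hd; exact Hs.
  - intros s Hs. specialize (Hk s Hs). lra.
Qed.

Lemma diverges_of_deriv_le_inv_affine (f df : R -> R) (t0 t1 x0 c eps : R) :
  0 < x0 -> 0 < c -> 0 < eps -> t0 <= t1 ->
  (forall s, t1 <= s -> is_derive f s (df s)) ->
  (forall s, t1 <= s -> df s <= - eps / (x0 + c * (s - t0))) ->
  is_lim f p_infty m_infty.
Proof.
  intros Hx0 Hc Heps Ht01 Hd Hdf.
  set (w := fun s => x0 + c * (s - t0)).
  assert (Hw : forall s, t0 <= s -> 0 < w s) by (intros s Hs; unfold w; nra).
  set (G := fun s => f s + eps / c * ln (w s)).
  assert (HG : forall s, t1 <= s -> G s <= G t1).
  { intros s Hs. enough (- G t1 <= - G s) by lra.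
    apply (nondecreasing_of_deriv_nonneg (fun s => - G s)
      (fun s => - (df s + eps / c * (c / w s)))); [exact Hs| |].
    - intros u Hu. apply (is_derive_opp G u (df u + eps / c * (c / w u))).
      apply (is_derive_plus f (fun s => eps / c * ln (w s))); [apply Hd; lra|].
      apply is_derive_scal. assert (0 < w u) by (apply Hw; lra). unfold w in *.
      auto_derive; [lra|field; lra].
    - intros u Hu. specialize (Hdf u ltac:(lra)). pose proof (Hw u ltac:(lra)).
      replace (eps / c * (c / w u)) with (eps / w u) by (field; split; lra).
      change (x0 + c * (u - t0)) with (w u) in Hdf.
      assert (- eps / w u = - (eps / w u)) by (unfold Rdiv; ring). lra. }
  apply is_lim_spec. intros M.
  set (E := exp (c / eps * (G t1 - M))).
  assert (HE : 0 < E / c) by (apply Rdiv_lt_0_compat; [apply exp_pos|lra]).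
  exists (t1 + E / c). intros s Hs.
  assert (Hln : c / eps * (G t1 - M) < ln (w s)).
  { rewrite <- (ln_exp (c / eps * (G t1 - M))). apply ln_increasing; [apply exp_pos|].
    fold E. unfold w. assert (E = c * (E / c)) by (field; lra). nra. }
  specialize (HG s ltac:(lra)).
  assert (Hm : G t1 - M < eps / c * ln (w s)).
  { replace (G t1 - M) with (eps / c * (c / eps * (G t1 - M))) by (field; lra).
    apply Rmult_lt_compat_l; [apply Rdiv_lt_0_compat|]; lra. }
  unfold G at 1 in HG. lra.
Qed.

Lemma trapped_below_diverges (f df w : R -> R) (t0 t1 x0 c lam : R) :
  0 < x0 -> 0 < c -> t0 <= t1 ->
  (forall s, t0 <= s -> is_derive f s (df s)) ->
  (forall s, t0 <= s -> / (x0 + c * (s - t0)) <= w s) ->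
  (forall r, r < lam -> exists eps, 0 < eps /\
     forall s, t0 <= s -> f s <= r -> df s <= - eps * w s) ->
  f t1 < lam -> is_lim f p_infty m_infty.
Proof.
  intros Hx0 Hc Ht01 Hd Hw Hdrift Hf1.
  assert (Hwpos : forall s, t0 <= s -> 0 < w s).
  { intros s Hs. eapply Rlt_le_trans; [|apply Hw, Hs]. apply Rinv_0_lt_compat; nra. }
  set (r := (f t1 + lam) / 2).
  destruct (Hdrift r ltac:(unfold r; lra)) as [eps [Heps Hdf]].
  assert (Htrap : forall s, t1 <= s -> f s < r).
  { apply (barrier_lt f df t1 r); [intros s Hs; apply Hd; lra|unfold r; lra|].
    intros s Hs Hfs. specialize (Hdf s ltac:(lra) ltac:(lra)).
    specialize (Hwpos s ltac:(lra)). nra. }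
  apply (diverges_of_deriv_le_inv_affine f df t0 t1 x0 c eps); try easy.
  - intros s Hs. apply Hd; lra.
  - intros s Hs. specialize (Hdf s ltac:(lra) ltac:(left; apply Htrap, Hs)).
    specialize (Hw s ltac:(lra)).
    assert (- eps * w s <= - eps * / (x0 + c * (s - t0))) by (apply Rmult_le_compat_neg_l; lra).
    unfold Rdiv. lra.
Qed.

Lemma pos_of_deriv_mul (f g : R -> R) (a K : R) : 0 <= K ->
  (forall t, a <= t -> is_derive f t (f t * g t)) ->
  (forall t, a < t -> 0 < f t < f a -> - K < g t) ->
  0 < f a -> forall t, a <= t -> 0 < f t.
Proof.
  intros HK Hd Hg Ha.
  set (e := fun t => exp (K * (t - a))).
  assert (He : forall t, is_derive e t (K * e t)).
  { intros t. unfold e. auto_derive; [easy|unfold Rminus; ring]. }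
  assert (Hh : forall t, a <= t -> f a / 2 < f t * e t).
  { apply (barrier_gt (fun t => f t * e t) (fun t => f t * e t * (g t + K)) a).
    - intros t Ht.
      replace (f t * e t * (g t + K)) with (f t * g t * e t + f t * (K * e t)) by ring.
      apply (is_derive_mult f e t (f t * g t) (K * e t)); [apply Hd, Ht|apply He|].
      intros; apply Rmult_comm.
    - unfold e. rewrite Rminus_diag, Rmult_0_r, exp_0. lra.
    - intros t Ht Hft.
      assert (He1 : 1 <= e t).
      { unfold e. rewrite <- exp_0. destruct (Req_dec K 0) as [->|HK0].
        - rewrite Rmult_0_l; lra.
        - left; apply exp_increasing; nra. }
      assert (Hf : f t = f a / 2 / e t) by (rewrite <- Hft; field; lra).
      assert (Hfpos : 0 < f t) by (rewrite Hf; apply Rdiv_lt_0_compat; lra).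
      assert (Hfle : f t < f a).
      { rewrite Hf. apply Rlt_div_l; nra. }
      specialize (Hg t Ht (conj Hfpos Hfle)).
      apply Rmult_lt_0_compat; [apply Rmult_lt_0_compat; [easy|lra]|lra]. }
  intros t Ht. specialize (Hh t Ht).
  assert (0 < e t) by apply exp_pos. nra.
Qed.

Lemma exp_le_exp (x y : R) : x <= y -> exp x <= exp y.
Proof. intros [Hlt|Heq]; [left; now apply exp_increasing|now rewrite Heq; right]. Qed.

Lemma is_lim_affine_p_infty (x0 c t0 : R) : 0 < c ->
  is_lim (fun t => x0 + c * (t - t0)) p_infty p_infty.
Proof.
  intros Hc. apply is_lim_spec. intros M. exists (t0 + (M - x0) / c). intros t Ht.
  assert (c * ((M - x0) / c) = M - x0) by (field; lra). nra.
Qed.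

Lemma is_lim_inv_affine (x0 c t0 : R) : 0 < c ->
  is_lim (fun t => / (x0 + c * (t - t0))) p_infty 0.
Proof.
  intros Hc. apply (is_lim_inv _ p_infty p_infty); [now apply is_lim_affine_p_infty|easy].
Qed.

Lemma is_lim_p_infty_eventually (f : R -> R) (l eps : R) :
  is_lim f p_infty l -> 0 < eps -> exists T, forall t, T <= t -> Rabs (f t - l) < eps.
Proof.
  intros Hf Heps. destruct (proj2 (is_lim_spec f p_infty l) Hf (mkposreal eps Heps)) as [M HM].
  exists (M + 1). intros t Ht. apply HM. lra.
Qed.

Lemma X_Z_positive (m sigma p b : R) (X Y Z : R -> R) (a : R) :
  1 < m -> 0 < sigma -> 1 < p -> 0 < b ->
  (forall t, a <= t -> is_derive X t (X t * ((m - 1) * Y t - 2 * X t))) ->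
  (forall t, a <= t -> is_derive Z t (Z t * ((p - 1) * Y t + sigma * X t))) ->
  (forall t, a < t -> - b < Y t) -> 0 < X a -> 0 < Z a ->
  forall t, a <= t -> 0 < X t /\ 0 < Z t.
Proof.
  intros Hm Hsigma Hp Hb HdX HdZ HY HXa HZa.
  assert (HX : forall t, a <= t -> 0 < X t).
  { apply (pos_of_deriv_mul X (fun t => (m - 1) * Y t - 2 * X t) a ((m - 1) * b + 2 * X a));
      [nra|exact HdX| |exact HXa].
    intros t Ht HXt. specialize (HY t Ht). nra. }
  assert (HZ : forall t, a <= t -> 0 < Z t).
  { apply (pos_of_deriv_mul Z (fun t => (p - 1) * Y t + sigma * X t) a ((p - 1) * b));
      [nra|exact HdZ| |exact HZa].
    intros t Ht _. specialize (HY t Ht). specialize (HX t ltac:(lra)). nra. }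
  intros t Ht. split; [apply HX|apply HZ]; exact Ht.
Qed.

Section TrappedTrajectory.

Variables (N : nat) (m sigma p b : R) (X Y Z : R -> R) (a : R).
Hypotheses (Hm : 1 < m) (Hsigma : 0 < sigma) (Hp : 1 < p) (Hb : 0 < b)
  (HNb : 1 <= INR N * b) (Hg0 : sigma * b < p - 1).
Hypotheses
  (HdX : forall t, a <= t -> is_derive X t (X t * ((m - 1) * Y t - 2 * X t)))
  (HdY : forall t, a <= t ->
     is_derive Y t (- Y t ^ 2 - b * Y t - X t - INR N * X t * Y t + X t * Z t))
  (HdZ : forall t, a <= t -> is_derive Z t (Z t * ((p - 1) * Y t + sigma * X t))).
Hypotheses (HX : forall t, a <= t -> 0 < X t) (HZ : forall t, a <= t -> 0 < Z t)
  (HY : forall t, a <= t -> - b < Y t < 0).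

Let dX t := X t * ((m - 1) * Y t - 2 * X t).
Let dY t := - Y t ^ 2 - b * Y t - X t - INR N * X t * Y t + X t * Z t.
Let k := (p - 1) / b.
Let g0 := 1 - sigma * b / (p - 1).

Lemma N_pos : 0 < INR N.
Proof. destruct (Rle_lt_dec (INR N) 0); nra. Qed.

Lemma k_pos : 0 < k.
Proof. apply Rdiv_lt_0_compat; lra. Qed.

Lemma g0_pos : 0 < g0.
Proof. unfold g0. enough (sigma * b / (p - 1) < 1) by lra. apply Rlt_div_l; lra. Qed.

Lemma is_derive_inv_X t : a <= t -> is_derive (fun s => / X s) t (2 - (m - 1) * Y t / X t).
Proof.
  intros Ht. assert (Hx := HX t Ht).
  replace (2 - (m - 1) * Y t / X t) with (- (X t * ((m - 1) * Y t - 2 * X t)) / X t ^ 2)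
    by (field; lra).
  apply (is_derive_inv X t); [apply HdX, Ht|lra].
Qed.

Lemma inv_X_lower_bound t0 t : a <= t0 -> t0 <= t -> / X t0 + 2 * (t - t0) <= / X t.
Proof.
  intros Ht0 Ht.
  apply (deriv_ge_linear_lower_bound (fun s => / X s) (fun s => 2 - (m - 1) * Y s / X s));
    [intros s Hs; apply is_derive_inv_X; lra| |exact Ht].
  intros s Hs. assert (Hx := HX s ltac:(lra)). destruct (HY s ltac:(lra)).
  assert (0 <= (m - 1) * (- Y s) / X s) by (apply Rdiv_le_0_compat; nra).
  unfold Rdiv in *. lra.
Qed.

Lemma is_lim_X : is_lim X p_infty 0.
Proof.
  apply (is_lim_le_le_loc (fun _ => 0) (fun t => / (/ X a + 2 * (t - a)))).
  - exists a. intros t Ht. split; [left; apply HX; lra|].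
    rewrite <- (Rinv_inv (X t)) at 1.
    apply Rinv_le_contravar; [|apply inv_X_lower_bound; lra].
    pose proof (Rinv_0_lt_compat _ (HX a (Rle_refl a))). lra.
  - apply is_lim_const.
  - apply is_lim_inv_affine; lra.
Qed.

Lemma Z_bounded : exists M, forall t, a <= t -> Z t < M.
Proof.
  set (W := fun t => Z t - 2 * sigma * Y t).
  set (M := Rmax (W a) (2 + 2 * sigma * b) + 1).
  pose proof (Rmax_l (W a) (2 + 2 * sigma * b)). pose proof (Rmax_r (W a) (2 + 2 * sigma * b)).
  exists M.
  assert (HW : forall t, a <= t -> W t < M).
  { apply (barrier_lt W (fun t => Z t * ((p - 1) * Y t + sigma * X t) - 2 * sigma * dY t) a M).
    - intros t Ht. apply (is_derive_minus Z (fun s => 2 * sigma * Y s)); [apply HdZ, Ht|].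
      apply is_derive_scal, HdY, Ht.
    - unfold M; lra.
    - intros t Ht HWt. unfold W in HWt.
      assert (Hx := HX t ltac:(lra)). destruct (HY t ltac:(lra)) as [Hyb Hy0].
      assert (HZ2 : 2 < Z t) by (unfold M in HWt; nra).
      pose proof N_pos.
      (* W' = (p-1) Y Z + 2 sigma Y (Y + b) + 2 sigma N X Y + sigma X (2 - Z) < 0 *)
      assert (0 < (p - 1) * (- Y t) * Z t) by (repeat apply Rmult_lt_0_compat; lra).
      assert (0 < 2 * sigma * (- Y t) * (Y t + b)) by (repeat apply Rmult_lt_0_compat; lra).
      assert (0 < 2 * sigma * INR N * X t * (- Y t)) by (repeat apply Rmult_lt_0_compat; lra).
      assert (0 < sigma * X t * (Z t - 2)) by (repeat apply Rmult_lt_0_compat; lra).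
      unfold dY. nra. }
  intros t Ht. specialize (HW t Ht). destruct (HY t Ht). unfold W in HW. nra.
Qed.

Lemma dY_eq t : dY t = (Y t + b) * (- Y t - INR N * X t) + X t * (Z t + INR N * b - 1).
Proof. unfold dY. ring. Qed.

Lemma Y_not_eventually_le (del T : R) : 0 < del -> a <= T ->
  (forall t, T <= t -> INR N * X t < del / 2) -> ~ (forall t, T <= t -> Y t <= - del).
Proof.
  intros Hdel HT HNX Hle.
  assert (Hdrift : forall t, T <= t -> (Y t + b) * (del / 2) <= dY t).
  { intros t Ht. rewrite dY_eq.
    assert (Hx := HX t ltac:(lra)). assert (Hz := HZ t ltac:(lra)).
    destruct (HY t ltac:(lra)). specialize (Hle t Ht). specialize (HNX t Ht).
    assert (0 <= X t * (Z t + INR N * b - 1)) by (apply Rmult_le_pos; lra).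
    assert ((Y t + b) * (del / 2) <= (Y t + b) * (- Y t - INR N * X t))
      by (apply Rmult_le_compat_l; lra).
    lra. }
  set (d := Y T + b).
  assert (Hd : 0 < d) by (unfold d; destruct (HY T ltac:(lra)); lra).
  assert (Hincr : forall t, T <= t -> Y T <= Y t).
  { intros t Ht.
    enough (Y T + 0 * (t - T) <= Y t) by lra.
    apply (deriv_ge_linear_lower_bound Y dY T); [intros s Hs; apply HdY; lra| |exact Ht].
    intros s Hs. specialize (Hdrift s Hs). destruct (HY s ltac:(lra)). nra. }
  assert (Hlin : forall t, T <= t -> Y T + d * (del / 2) * (t - T) <= Y t).
  { apply (deriv_ge_linear_lower_bound Y dY T); [intros s Hs; apply HdY; lra|].
    intros s Hs. specialize (Hdrift s Hs). specialize (Hincr s Hs).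
    assert (d * (del / 2) <= (Y s + b) * (del / 2)) by (apply Rmult_le_compat_r; unfold d; lra).
    lra. }
  set (t := T + b / (d * (del / 2))).
  assert (Hq : 0 < b / (d * (del / 2))) by (apply Rdiv_lt_0_compat; nra).
  specialize (Hlin t ltac:(unfold t; lra)).
  replace (d * (del / 2) * (t - T)) with b in Hlin by (unfold t; field; nra).
  destruct (HY t ltac:(unfold t; lra)). unfold d in Hd. lra.
Qed.

Lemma Y_eventually_gt (del : R) : 0 < del < b -> exists T, forall t, T <= t -> - del < Y t.
Proof.
  intros Hdel. pose proof N_pos as HN.
  destruct (is_lim_p_infty_eventually X 0 (del / (2 * INR N)) is_lim_X) as [T1 HT1].
  { apply Rdiv_lt_0_compat; lra. }
  pose proof (Rmax_l a T1). pose proof (Rmax_r a T1). set (T := Rmax a T1) in *.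
  assert (HNX : forall t, T <= t -> INR N * X t < del / 2).
  { intros t Ht. specialize (HT1 t ltac:(lra)). rewrite Rminus_0_r, Rabs_pos_eq in HT1
      by (left; apply HX; lra).
    apply (Rmult_lt_compat_l (INR N)) in HT1; [|easy].
    replace (INR N * (del / (2 * INR N))) with (del / 2) in HT1 by (field; lra). exact HT1. }
  destruct (classic (exists t1, T <= t1 /\ - del < Y t1)) as [[t1 [Ht1 Hy1]]|Hnever].
  - exists t1. apply (barrier_gt Y dY t1 (- del)); [intros t Ht; apply HdY; lra|exact Hy1|].
    intros t Ht Hyt. rewrite dY_eq, Hyt.
    assert (Hx := HX t ltac:(lra)). assert (Hz := HZ t ltac:(lra)).
    specialize (HNX t ltac:(lra)).
    assert (0 < (- del + b) * (- - del - INR N * X t)) by (apply Rmult_lt_0_compat; lra).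
    assert (0 < X t * (Z t + INR N * b - 1)) by (apply Rmult_lt_0_compat; lra).
    lra.
  - exfalso. apply (Y_not_eventually_le del T); try easy; try lra.
    intros t Ht. apply Rnot_lt_le. intros Hy. apply Hnever. now exists t.
Qed.

Lemma is_lim_Y : is_lim Y p_infty 0.
Proof.
  apply is_lim_spec. intros eps.
  destruct (Y_eventually_gt (Rmin eps b / 2)) as [T HT].
  { pose proof (Rmin_l eps b). pose proof (Rmin_r eps b).
    assert (0 < Rmin eps b) by (apply Rmin_pos; [apply cond_pos|easy]). lra. }
  exists (Rmax a T). intros t Ht. pose proof (Rmax_l a T). pose proof (Rmax_r a T).
  specialize (HT t ltac:(lra)). destruct (HY t ltac:(lra)).
  pose proof (Rmin_l eps b). assert (0 < Rmin eps b) by (apply Rmin_pos; [apply cond_pos|easy]).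
  rewrite Rminus_0_r, Rabs_left by lra. lra.
Qed.

Lemma X_Y_eventually_small : exists t0, a <= t0 /\
  forall t, t0 <= t -> X t < b / 8 /\ m * - Y t < b / 4.
Proof.
  destruct (is_lim_p_infty_eventually X 0 (b / 8) is_lim_X) as [T1 HT1]; [lra|].
  destruct (is_lim_p_infty_eventually Y 0 (b / (4 * m)) is_lim_Y) as [T2 HT2].
  { apply Rdiv_lt_0_compat; lra. }
  pose proof (Rmax_l a (Rmax T1 T2)). pose proof (Rmax_r a (Rmax T1 T2)).
  pose proof (Rmax_l T1 T2). pose proof (Rmax_r T1 T2).
  exists (Rmax a (Rmax T1 T2)). split; [easy|].
  intros t Ht. specialize (HT1 t ltac:(lra)). specialize (HT2 t ltac:(lra)).
  assert (Hx := HX t ltac:(lra)). destruct (HY t ltac:(lra)).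
  rewrite Rminus_0_r, Rabs_pos_eq in HT1 by lra. rewrite Rminus_0_r, Rabs_left in HT2 by lra.
  split; [easy|]. apply (Rmult_lt_compat_l m) in HT2; [|lra].
  replace (m * (b / (4 * m))) with (b / 4) in HT2 by (field; lra). lra.
Qed.

Lemma Y_over_X_bounded : exists C t0, 0 < C /\ a <= t0 /\ forall t, t0 <= t -> - Y t < C * X t.
Proof.
  destruct X_Y_eventually_small as [t0 [Ht0 Hsmall]].
  set (C := Rmax (- Y t0 / X t0) (2 / b) + 1).
  assert (HC0 : - Y t0 / X t0 < C) by (pose proof (Rmax_l (- Y t0 / X t0) (2 / b)); unfold C; lra).
  assert (HC : 2 < C * b).
  { pose proof (Rmax_r (- Y t0 / X t0) (2 / b)).
    enough (2 / b * b = 2) by (unfold C; nra). field; lra. }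
  assert (HCpos : 0 < C) by nra.
  exists C, t0. split; [easy|split; [easy|]].
  assert (Hq : forall t, t0 <= t -> - Y t / X t < C).
  { apply (barrier_lt (fun s => - Y s / X s)
      (fun s => ((- dY s) * X s - (- Y s) * dX s) / X s ^ 2) t0 C).
    - intros t Ht. apply (is_derive_div (fun s => - Y s) X t (- dY t) (dX t)).
      + apply (is_derive_opp Y t (dY t)), HdY; lra.
      + apply HdX; lra.
      + apply Rgt_not_eq, HX; lra.
    - lra.
    - intros t Ht Hqt. assert (Hx := HX t ltac:(lra)). assert (Hz := HZ t ltac:(lra)).
      destruct (Hsmall t ltac:(lra)) as [HXs HYs].
      assert (HYC : Y t = - C * X t) by (rewrite <- Hqt; field; lra).
      replace ((- dY t * X t - - Y t * dX t) / X t ^ 2)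
        with (1 - C * (b - m * (C * X t) - 2 * X t) - INR N * (C * X t) - Z t)
        by (unfold dX, dY; rewrite HYC; field; lra).
      assert (HN : 0 <= INR N) by apply pos_INR.
      rewrite HYC in HYs.
      assert (b / 2 < b - m * (C * X t) - 2 * X t) by lra.
      assert (1 < C * (b - m * (C * X t) - 2 * X t)) by nra.
      assert (0 <= INR N * (C * X t)) by (apply Rmult_le_pos; nra).
      lra. }
  intros t Ht. specialize (Hq t Ht). assert (Hx := HX t ltac:(lra)).
  apply Rlt_div_l in Hq; [lra|easy].
Qed.

Let V t := ln (Z t) + k * Y t.
Let dV t := k * X t * (Z t - g0) - k * Y t * (Y t + INR N * X t).

Lemma is_derive_V t : a <= t -> is_derive V t (dV t).
Proof.
  intros Ht. assert (Hz := HZ t Ht).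
  assert (Hln := is_derive_comp ln Z t (/ Z t) _ (is_derive_ln _ Hz) (HdZ t Ht)).
  replace (dV t) with (scal (Z t * ((p - 1) * Y t + sigma * X t)) (/ Z t)
      + k * dY t).
  - apply (is_derive_plus (fun s => ln (Z s)) (fun s => k * Y s)); [exact Hln|].
    apply is_derive_scal, HdY, Ht.
  - unfold scal; simpl; unfold mult; simpl. unfold dV, dY, g0, k. field; lra.
Qed.

Section RatioBound.

Variables (C t0 : R).
Hypotheses (HC : 0 < C) (Ht0 : a <= t0) (Hratio : forall t, t0 <= t -> - Y t < C * X t).

Lemma X_ge_inv_affine t : t0 <= t -> / (/ X t0 + ((m - 1) * C + 2) * (t - t0)) <= X t.
Proof.
  intros Ht. assert (Hx := HX t ltac:(lra)).
  rewrite <- (Rinv_inv (X t)). apply Rinv_le_contravar; [apply Rinv_0_lt_compat, Hx|].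
  apply (deriv_le_linear_upper_bound (fun s => / X s) (fun s => 2 - (m - 1) * Y s / X s));
    [intros s Hs; apply is_derive_inv_X; lra| |exact Ht].
  intros s Hs. assert (Hxs := HX s ltac:(lra)). specialize (Hratio s Hs).
  assert ((m - 1) * (- Y s) / X s <= (m - 1) * C)
    by (apply Rle_div_l; [easy|]; nra).
  unfold Rdiv in *. lra.
Qed.

Let K := k * C * (C + INR N).
Let Psi_lo t := V t - K / 2 * X t.
Let Psi_hi t := V t + (k * C + K / 2) * X t.

Lemma cross_term_bound t : t0 <= t ->
  - K * X t ^ 2 <= - k * Y t * (Y t + INR N * X t) <= K * X t ^ 2.
Proof.
  intros Ht. assert (Hx := HX t ltac:(lra)). destruct (HY t ltac:(lra)).
  specialize (Hratio t Ht).
  pose proof k_pos as Hk. pose proof N_pos as HN.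
  assert (H1 : 0 <= (- Y t) * (INR N * X t) <= C * X t * (INR N * X t)).
  { split; [apply Rmult_le_pos; nra|apply Rmult_le_compat_r; nra]. }
  assert (H2 : 0 <= (- Y t) ^ 2 <= (C * X t) ^ 2).
  { split; [apply pow2_ge_0|apply pow_incr; lra]. }
  replace (- k * Y t * (Y t + INR N * X t)) with (k * ((- Y t) * (INR N * X t)) - k * (- Y t) ^ 2)
    by ring.
  assert (k * ((- Y t) * (INR N * X t)) <= k * (C * X t * (INR N * X t)))
    by (apply Rmult_le_compat_l; lra).
  assert (k * (- Y t) ^ 2 <= k * (C * X t) ^ 2) by (apply Rmult_le_compat_l; lra).
  assert (0 <= k * ((- Y t) * (INR N * X t))) by (apply Rmult_le_pos; lra).
  assert (0 <= k * (- Y t) ^ 2) by (apply Rmult_le_pos; lra).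
  unfold K. split; nra.
Qed.

Lemma is_derive_Psi_lo t : t0 <= t -> is_derive Psi_lo t (dV t - K / 2 * dX t).
Proof.
  intros Ht. apply (is_derive_minus V (fun s => K / 2 * X s)); [apply is_derive_V; lra|].
  apply is_derive_scal, HdX; lra.
Qed.

Lemma is_derive_Psi_hi t : t0 <= t -> is_derive Psi_hi t (dV t + (k * C + K / 2) * dX t).
Proof.
  intros Ht. apply (is_derive_plus V (fun s => (k * C + K / 2) * X s)); [apply is_derive_V; lra|].
  apply is_derive_scal, HdX; lra.
Qed.

Lemma K_nonneg : 0 <= K.
Proof. pose proof k_pos. pose proof N_pos. unfold K. apply Rmult_le_pos; nra. Qed.

Lemma deriv_Psi_lo_ge t : t0 <= t -> k * X t * (Z t - g0) <= dV t - K / 2 * dX t.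
Proof.
  intros Ht. destruct (cross_term_bound t Ht) as [Hlo _]. pose proof K_nonneg.
  assert (Hx := HX t ltac:(lra)). destruct (HY t ltac:(lra)).
  assert (0 <= K / 2 * ((m - 1) * (X t * - Y t))).
  { apply Rmult_le_pos; [lra|]. apply Rmult_le_pos; [lra|]. apply Rmult_le_pos; lra. }
  unfold dV, dX. nra.
Qed.

Lemma deriv_Psi_hi_le t : t0 <= t -> dV t + (k * C + K / 2) * dX t <= k * X t * (Z t - g0).
Proof.
  intros Ht. destruct (cross_term_bound t Ht) as [_ Hhi]. pose proof K_nonneg. pose proof k_pos.
  assert (Hx := HX t ltac:(lra)). destruct (HY t ltac:(lra)).
  assert (0 <= (k * C + K / 2) * ((m - 1) * (X t * - Y t))).
  { apply Rmult_le_pos; [nra|]. apply Rmult_le_pos; [lra|]. apply Rmult_le_pos; lra. }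
  assert (0 <= k * C * X t ^ 2)
    by (apply Rmult_le_pos; [apply Rmult_le_pos|apply pow2_ge_0]; lra).
  unfold dV, dX. nra.
Qed.

Lemma ln_Z_between_Psi t : t0 <= t -> Psi_lo t <= ln (Z t) <= Psi_hi t.
Proof.
  intros Ht. pose proof K_nonneg. pose proof k_pos.
  assert (Hx := HX t ltac:(lra)). destruct (HY t ltac:(lra)). specialize (Hratio t Ht).
  unfold Psi_lo, Psi_hi, V. split; nra.
Qed.

Lemma Z_to_0_of_Psi_hi_lt t1 : t0 <= t1 -> Psi_hi t1 < ln g0 -> is_lim Z p_infty 0.
Proof.
  intros Ht1 Hlt. pose proof k_pos. pose proof g0_pos.
  assert (Hdiv : is_lim Psi_hi p_infty m_infty).
  { apply (trapped_below_diverges Psi_hi (fun t => dV t + (k * C + K / 2) * dX t) X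
      t0 t1 (/ X t0) ((m - 1) * C + 2) (ln g0)); try easy.
    - apply Rinv_0_lt_compat, HX, Ht0.
    - nra.
    - exact is_derive_Psi_hi.
    - exact X_ge_inv_affine.
    - intros r Hr. exists (k * (g0 - exp r)).
      assert (Hexp : exp r < g0) by (rewrite <- (exp_ln g0) by easy; now apply exp_increasing).
      split; [apply Rmult_lt_0_compat; lra|].
      intros s Hs Hpsi. assert (Hz := HZ s ltac:(lra)). assert (Hx := HX s ltac:(lra)).
      assert (HZr : Z s <= exp r).
      { rewrite <- (exp_ln (Z s)) by easy. apply exp_le_exp.
        pose proof (ln_Z_between_Psi s Hs). lra. }
      pose proof (deriv_Psi_hi_le s Hs).
      assert (0 <= k * X s * (exp r - Z s)) by (apply Rmult_le_pos; nra).
      lra. }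
  assert (Hln : is_lim (fun t => ln (Z t)) p_infty m_infty).
  { apply (is_lim_le_m_loc Psi_hi); [|exact Hdiv].
    exists t0. intros t Ht. apply ln_Z_between_Psi; lra. }
  apply (is_lim_ext_loc (fun t => exp (ln (Z t)))).
  { exists a. intros t Ht. apply exp_ln, HZ; lra. }
  apply (is_lim_comp exp (fun t => ln (Z t)) p_infty 0 m_infty is_lim_exp_m Hln).
  exists 0. easy.
Qed.

Lemma Psi_lo_le_ln_g0 t1 : t0 <= t1 -> Psi_lo t1 <= ln g0.
Proof.
  intros Ht1. apply Rnot_lt_le. intros Hgt. pose proof k_pos. pose proof g0_pos.
  assert (Hdiv : is_lim (fun t => - Psi_lo t) p_infty m_infty).
  { apply (trapped_below_diverges (fun t => - Psi_lo t) (fun t => - (dV t - K / 2 * dX t)) X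
      t0 t1 (/ X t0) ((m - 1) * C + 2) (- ln g0)); try easy.
    - apply Rinv_0_lt_compat, HX, Ht0.
    - nra.
    - intros s Hs. apply (is_derive_opp Psi_lo s), is_derive_Psi_lo, Hs.
    - exact X_ge_inv_affine.
    - intros r Hr. exists (k * (exp (- r) - g0)).
      assert (Hexp : g0 < exp (- r)) by (rewrite <- (exp_ln g0) by easy; apply exp_increasing; lra).
      split; [apply Rmult_lt_0_compat; lra|].
      intros s Hs Hpsi. assert (Hz := HZ s ltac:(lra)). assert (Hx := HX s ltac:(lra)).
      assert (HZr : exp (- r) <= Z s).
      { rewrite <- (exp_ln (Z s)) by easy. apply exp_le_exp.
        pose proof (ln_Z_between_Psi s Hs). lra. }
      pose proof (deriv_Psi_lo_ge s Hs).
      assert (0 <= k * X s * (Z s - exp (- r))) by (apply Rmult_le_pos; nra).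
      lra.
    - lra. }
  assert (Hln : is_lim (fun t => ln (Z t)) p_infty p_infty).
  { apply (is_lim_le_p_loc (fun t => - - Psi_lo t)).
    - exists t0. intros t Ht. rewrite Ropp_involutive. apply ln_Z_between_Psi; lra.
    - apply (is_lim_opp _ _ m_infty Hdiv). }
  destruct Z_bounded as [M HM].
  apply (is_lim_le_loc (fun t => ln (Z t)) (fun _ => ln M) p_infty p_infty (ln M)).
  - exists a. intros t Ht. left. apply ln_increasing; [apply HZ; lra|apply HM; lra].
  - exact Hln.
  - apply is_lim_const.
Qed.

Lemma Z_to_g0_of_Psi_hi_ge : (forall t, t0 <= t -> ln g0 <= Psi_hi t) -> is_lim Z p_infty g0.
Proof.
  intros Hhi.
  assert (Hln : is_lim (fun t => ln (Z t)) p_infty (ln g0)).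
  { apply (is_lim_le_le_loc (fun t => ln g0 - k * Y t - (k * C + K / 2) * X t)
             (fun t => ln g0 - k * Y t + K / 2 * X t)).
    - exists t0. intros t Ht. pose proof (ln_Z_between_Psi t ltac:(lra)).
      specialize (Hhi t ltac:(lra)). pose proof (Psi_lo_le_ln_g0 t ltac:(lra)).
      unfold Psi_lo, Psi_hi, V in *. lra.
    - replace (ln g0) with (ln g0 - k * 0 - (k * C + K / 2) * 0) at 1 by ring.
      apply is_lim_minus'; [apply is_lim_minus'; [apply is_lim_const|]|].
      + exact (is_lim_scal_l Y k p_infty 0 is_lim_Y).
      + exact (is_lim_scal_l X (k * C + K / 2) p_infty 0 is_lim_X).
    - replace (ln g0) with (ln g0 - k * 0 + K / 2 * 0) at 1 by ring.
      apply is_lim_plus'; [apply is_lim_minus'; [apply is_lim_const|]|].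
      + exact (is_lim_scal_l Y k p_infty 0 is_lim_Y).
      + exact (is_lim_scal_l X (K / 2) p_infty 0 is_lim_X). }
  rewrite <- (exp_ln g0) by apply g0_pos.
  apply (is_lim_ext_loc (fun t => exp (ln (Z t)))).
  { exists a. intros t Ht. apply exp_ln, HZ; lra. }
  apply (is_lim_comp_continuous _ exp p_infty (ln g0) Hln).
  apply (ex_derive_continuous exp). eexists; apply is_derive_exp.
Qed.

Lemma Z_limit_dichotomy : is_lim Z p_infty 0 \/ is_lim Z p_infty g0.
Proof.
  destruct (classic (exists t1, t0 <= t1 /\ Psi_hi t1 < ln g0)) as [[t1 [Ht1 Hlt]]|Hnever].
  - left. exact (Z_to_0_of_Psi_hi_lt t1 Ht1 Hlt).
  - right. apply Z_to_g0_of_Psi_hi_ge. intros t Ht.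
    apply Rnot_lt_le. intros Hlt. apply Hnever. now exists t.
Qed.

End RatioBound.

Lemma trapped_trajectory_limit :
  (is_lim X p_infty 0 /\ is_lim Y p_infty 0 /\ is_lim Z p_infty 0) \/
  (is_lim X p_infty 0 /\ is_lim Y p_infty 0 /\ is_lim Z p_infty g0).
Proof.
  destruct Y_over_X_bounded as [C [t0 [HC [Ht0 Hratio]]]].
  destruct (Z_limit_dichotomy C t0 HC Ht0 Hratio) as [HZlim|HZlim];
    [left|right]; repeat split; auto using is_lim_X, is_lim_Y.
Qed.

End TrappedTrajectory.

Lemma beta_div_alpha (m sigma p : R) : 1 < m -> 0 < sigma -> m < p ->
  beta m sigma p / alpha m sigma p = (p - m) / (sigma + 2).
Proof.
  intros Hm Hsigma Hp. assert (0 < Lpar m sigma p) by (unfold Lpar; nra).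
  unfold beta, alpha. field; lra.
Qed.

Lemma gamma0_eq (m sigma p : R) : 1 < m -> 0 < sigma -> m < p ->
  gamma0 m sigma p = 1 - sigma * ((p - m) / (sigma + 2)) / (p - 1).
Proof.
  intros Hm Hsigma Hp. assert (0 < Lpar m sigma p) by (unfold Lpar; nra).
  unfold gamma0, alpha. unfold Lpar in *. field. repeat split; lra.
Qed.

Lemma sigma_ratio_lt (m sigma p : R) : 1 < m -> 0 < sigma -> m < p ->
  sigma * ((p - m) / (sigma + 2)) < p - 1.
Proof.
  intros Hm Hsigma Hp. apply Rmult_lt_reg_r with (sigma + 2); [lra|].
  replace (sigma * ((p - m) / (sigma + 2)) * (sigma + 2)) with (sigma * (p - m)) by (field; lra).
  nra.
Qed.

Lemma N_ratio_ge_1_of_pF_le (N : nat) (m sigma p : R) : (1 <= N)%nat -> 0 < sigma ->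
  pF N m sigma <= p -> 1 <= INR N * ((p - m) / (sigma + 2)).
Proof.
  intros HN Hsigma HpF. unfold pF in HpF.
  assert (HNr : 1 <= INR N) by (apply (le_INR 1), HN).
  replace (INR N * ((p - m) / (sigma + 2))) with (INR N * (p - m) / (sigma + 2)) by (field; lra).
  apply Rle_div_r; [lra|].
  assert ((sigma + 2) / INR N * INR N = sigma + 2) by (field; lra). nra.
Qed.

Lemma S1_Y_on_plane (N : nat) (m sigma p x z : R) :
  S1_Y N m sigma p x (- ((p - m) / (sigma + 2))) z
  = x * (INR N * ((p - m) / (sigma + 2)) - 1 + z).
Proof. unfold S1_Y. ring. Qed.

Theorem lemma5p1 (N : nat) (m sigma p : R)
  (HN : (1 <= N)%nat) (Hm : 1 < m) (Hsigma : 0 < sigma) (Hp : m < p)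
  (HpF : pF N m sigma <= p) :
  (forall (X Y Z : R -> R) (eta_s : R),
     S1_solution_from N m sigma p X Y Z eta_s ->
     0 < X eta_s -> 0 < Z eta_s ->
     (forall eta, eta_s < eta ->
        - (beta m sigma p / alpha m sigma p) < Y eta /\ Y eta < 0) ->
     converges_to X Y Z 0 0 0 \/ converges_to X Y Z 0 0 (gamma0 m sigma p))
  /\
  (forall x z, 0 < x -> 0 < z ->
     0 < S1_Y N m sigma p x (- (beta m sigma p / alpha m sigma p)) z).
Proof.
  rewrite beta_div_alpha by easy.
  assert (HNb := N_ratio_ge_1_of_pF_le N m sigma p HN Hsigma HpF).
  set (b := (p - m) / (sigma + 2)) in *.
  assert (Hb : 0 < b) by (apply Rdiv_lt_0_compat; lra).
  split.
  - intros X Y Z a Hsol HXa HZa HY.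
    assert (HdX : forall t, a <= t -> is_derive X t (X t * ((m - 1) * Y t - 2 * X t)))
      by (intros t Ht; apply (Hsol t Ht)).
    assert (HdZ : forall t, a <= t -> is_derive Z t (Z t * ((p - 1) * Y t + sigma * X t)))
      by (intros t Ht; apply (Hsol t Ht)).
    assert (Hpos := X_Z_positive m sigma p b X Y Z a Hm Hsigma ltac:(lra) Hb HdX HdZ
      (fun t Ht => proj1 (HY t Ht)) HXa HZa).
    unfold converges_to. rewrite gamma0_eq by easy.
    apply (trapped_trajectory_limit N m sigma p b X Y Z (a + 1)); try lra;
      [now apply sigma_ratio_lt|(intros t Ht; first [apply (Hsol t) | apply Hpos | apply HY]; lra)..].
  - intros x z Hx Hz. rewrite S1_Y_on_plane. fold b. apply Rmult_lt_0_compat; lra.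
Qed.
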